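(* Let $h$ and $k$ be relatively prime odd integers with $k>0$. Then $$B_{1}(h,k)=\frac{2h}{\pi}\sum_{\substack{n=1\\ 2n-1\not\equiv 0 \pmod{k}}}^{\infty}\frac{1}{2n-1}\tan\left(\frac{\pi h(2n-1)}{2k}\right)+\frac{1}{2k}-\frac{1}{2}.$$
   Context: $[x]$ denotes the greatest integer $\le x$. For integers $h,k$ with $k>0$ and $\gcd(h,k)=1$, $$B_{1}(h,k)=\sum_{j=1}^{k-1}(-1)^{j+\left[\frac{hj}{k}\right]}\left[\frac{hj}{k}\right].$$ *)

From Stdlib Require Import Reals ZArith List Lra Lia.
From Coquelicot Require Import Coquelicot.
Open Scope R_scope.

Definition sgnpow (e : Z) : Z := if Z.even e then 1%Z else (-1)%Z.

(* B_1(h,k) = sum_{j=1}^{k-1} (-1)^(j + [hj/k]) [hj/k];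
   for k > 0, Z.div (h*j) k is the floor of hj/k. *)
Definition B_1 (h k : Z) : Z :=
  fold_right Z.add 0%Z
    (map (fun n : nat =>
            let j := Z.of_nat n in
            let q := Z.div (h * j) k in
            (sgnpow (j + q) * q)%Z)
         (seq 1 (Z.to_nat k - 1))).

(* The n-th term (n >= 1 shifted to index n-1 = m) of the series
   sum_{n>=1, 2n-1 not= 0 mod k} tan(pi h (2n-1)/(2k)) / (2n-1);
   excluded indices contribute 0, so partial sums are those of the
   restricted series taken in increasing order of n. *)
Definition tan_term (h k : Z) (m : nat) : R :=
  let o := (2 * Z.of_nat m + 1)%Z in
  if Z.eqb (Z.modulo o k) 0 then 0
  else tan (PI * IZR h * IZR o / (2 * IZR k)) / IZR o.

From Stdlib Require Import Reals ZArith List Permutation Lra Lia.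
From Coquelicot Require Import Coquelicot.
Open Scope R_scope.

(* For odd [K = 2t + 1], the closed form of
   [4 cos(x)^2 * sum_(j=1..m) (-1)^j j sin(2jx)] yields
   [tan x = (2/K) sum_(j=1..K-1) (-1)^j j sin(2jx)] whenever [cos(2Kx) = -1].
   With [K = k] and [x = pi h o / (2k)] for odd [o], each term of the series becomes a
   finite combination of the square-wave series [sum_n sin((2n+1)y)/(2n+1)], which
   equals [pi/4] on [(0, pi)] and flips sign under [y -> y + pi]; so the series sums to
   [(pi/2k) sum_(j=1..k-1) (-1)^(j + [hj/k]) j].  The square-wave series itself comes
   from Leibniz's series at [y = pi/2], its partial sums at [y] and at [pi/2] differing
   by [O(1/N)] by the mean value theorem.
   Finally, writing [hj = k [hj/k] + r_j] with [h], [k] odd, [j + [hj/k]] and [r_j]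
   have the same parity, so [k B_1(h,k) - h sum_j (-1)^(j + [hj/k]) j
   = - sum_j (-1)^(r_j) r_j]; as [j -> r_j] permutes [{1, ..., k-1}], this is
   [- sum_(r=1..k-1) (-1)^r r = -(k-1)/2]. *)

Lemma sgnpow_add a b : sgnpow (a + b) = (sgnpow a * sgnpow b)%Z.
Proof. unfold sgnpow; rewrite Z.even_add; now destruct (Z.even a), (Z.even b). Qed.

Lemma sgnpow_even_eq a b : Z.even a = Z.even b -> sgnpow a = sgnpow b.
Proof. unfold sgnpow; now intros ->. Qed.

Lemma pow_m1_sgnpow (j : nat) : (-1) ^ j = IZR (sgnpow (Z.of_nat j)).
Proof.
  induction j as [|j IH]; [reflexivity|].
  rewrite Nat2Z.inj_succ, <- Z.add_1_r, sgnpow_add, mult_IZR, <- IH.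
  change (sgnpow 1) with (-1)%Z; simpl; ring.
Qed.

Lemma cos_IZR_mul_PI z : cos (IZR z * PI) = IZR (sgnpow z).
Proof.
  induction z as [|z IH|z IH] using Z.peano_ind.
  - now rewrite Rmult_0_l, cos_0.
  - rewrite <- Z.add_1_r, plus_IZR, Rmult_plus_distr_r, Rmult_1_l, neg_cos, IH,
      sgnpow_add, mult_IZR.
    change (sgnpow 1) with (-1)%Z; simpl; ring.
  - rewrite <- (Z.succ_pred z), <- Z.add_1_r, plus_IZR, Rmult_plus_distr_r, Rmult_1_l,
      neg_cos, sgnpow_add, mult_IZR in IH.
    change (sgnpow 1) with (-1)%Z in IH; simpl in IH; lra.
Qed.

Lemma sin_plus_IZR_mul_PI a z : sin (a + IZR z * PI) = IZR (sgnpow z) * sin a.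
Proof.
  rewrite sin_plus, cos_IZR_mul_PI, (sin_eq_0_1 (IZR z * PI)) by now exists z.
  ring.
Qed.

Lemma IZR_odd (n : nat) : IZR (2 * Z.of_nat n + 1) = 2 * INR n + 1.
Proof. now rewrite plus_IZR, mult_IZR, <- INR_IZR_INZ. Qed.

Definition rsum (F : nat -> R) (l : list nat) : R := fold_right Rplus 0 (map F l).

Lemma rsum_app F l1 l2 : rsum F (l1 ++ l2) = rsum F l1 + rsum F l2.
Proof. induction l1 as [|j l1 IH]; unfold rsum in *; simpl; [ring | rewrite IH; ring]. Qed.

Lemma rsum_seq_S F m : rsum F (seq 1 (S m)) = rsum F (seq 1 m) + F (S m).
Proof. rewrite seq_S, rsum_app; unfold rsum; simpl; ring. Qed.

Lemma rsum_ext_in F G l : (forall j, In j l -> F j = G j) -> rsum F l = rsum G l.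
Proof. intro H; unfold rsum; f_equal; now apply map_ext_in. Qed.

Lemma rsum_scal_l a F l : rsum (fun j => a * F j) l = a * rsum F l.
Proof. induction l as [|j l IH]; unfold rsum in *; simpl; [ring | rewrite IH; ring]. Qed.

Lemma rsum_opp F l : rsum (fun j => - F j) l = - rsum F l.
Proof. induction l as [|j l IH]; unfold rsum in *; simpl; [ring | rewrite IH; ring]. Qed.

Lemma rsum_minus F G l : rsum (fun j => F j - G j) l = rsum F l - rsum G l.
Proof. induction l as [|j l IH]; unfold rsum in *; simpl; [ring | rewrite IH; ring]. Qed.

Lemma rsum_map F g l : rsum F (map g l) = rsum (fun j => F (g j)) l.
Proof. unfold rsum; now rewrite map_map. Qed.

Lemma rsum_perm F l l' : Permutation l l' -> rsum F l = rsum F l'.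
Proof. induction 1; unfold rsum in *; simpl in *; lra. Qed.

Lemma IZR_fold_Zplus (f : nat -> Z) l :
  IZR (fold_right Z.add 0%Z (map f l)) = rsum (fun j => IZR (f j)) l.
Proof. induction l as [|j l IH]; unfold rsum in *; simpl; [reflexivity | now rewrite plus_IZR, IH]. Qed.

Lemma is_series_mult_l c a l : is_series a l -> is_series (fun n => c * a n) (c * l).
Proof. exact (is_series_scal_l c a l). Qed.

Lemma is_series_rsum (f : nat -> nat -> R) (v : nat -> R) l :
  (forall j, In j l -> is_series (f j) (v j)) ->
  is_series (fun m => rsum (fun j => f j m) l) (rsum v l).
Proof.
  induction l as [|j l IH]; intro H.
  - enough (Hlim : is_lim_seq (sum_n (fun _ => 0)) 0) by exact Hlim.
    apply (is_lim_seq_ext (fun _ => 0)); [|apply is_lim_seq_const].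
    intro n; rewrite sum_n_const; ring.
  - apply (is_series_plus (f j) _ (v j)); [apply H; now left|].
    apply IH; intros i Hi; apply H; now right.
Qed.

(** * The square-wave series *)

Definition odd_sin_sum (N : nat) (t : R) : R :=
  sum_n (fun n => sin ((2 * INR n + 1) * t) / (2 * INR n + 1)) N.

Definition odd_cos_sum (N : nat) (t : R) : R :=
  sum_n (fun n => cos ((2 * INR n + 1) * t)) N.

Lemma odd_cos_sum_closed N t : 2 * sin t * odd_cos_sum N t = sin (2 * (INR N + 1) * t).
Proof.
  unfold odd_cos_sum; induction N as [|N IH].
  - rewrite sum_O; simpl.
    replace ((2 * 0 + 1) * t) with t by ring; replace (2 * (0 + 1) * t) with (2 * t) by ring.
    rewrite sin_2a; ring.
  - rewrite sum_Sn, S_INR; unfold plus; simpl.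
    rewrite Rmult_plus_distr_l, IH.
    replace (2 * (INR N + 1) * t) with ((2 * (INR N + 1) + 1) * t - t) by ring.
    replace (2 * (INR N + 1 + 1) * t) with ((2 * (INR N + 1) + 1) * t + t) by ring.
    rewrite sin_plus, sin_minus; ring.
Qed.

Lemma is_derive_odd_sin_sum N t : is_derive (odd_sin_sum N) t (odd_cos_sum N t).
Proof.
  apply (is_derive_sum_n (fun n t => sin ((2 * INR n + 1) * t) / (2 * INR n + 1))).
  intros n _; assert (0 <= INR n) by apply pos_INR.
  auto_derive; [easy | field; lra].
Qed.

(* Subtracting this correction cancels the oscillating part
   [sin (2 M t) / (2 sin t)] of [odd_cos_sum] and leaves a derivative of size [O(1/M)]. *)
Definition odd_sin_corr (M t : R) : R := - cos (2 * M * t) / (4 * M * sin t).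

Lemma is_derive_odd_sin_sum_corr N t : sin t <> 0 ->
  is_derive (fun t => odd_sin_sum N t - odd_sin_corr (INR N + 1) t) t
    (- cos (2 * (INR N + 1) * t) * cos t / (4 * (INR N + 1) * sin t ^ 2)).
Proof.
  intro Hs; assert (0 <= INR N) by apply pos_INR.
  assert (Hcorr : is_derive (odd_sin_corr (INR N + 1)) t
     (sin (2 * (INR N + 1) * t) / (2 * sin t)
      + cos (2 * (INR N + 1) * t) * cos t / (4 * (INR N + 1) * sin t ^ 2))).
  { unfold odd_sin_corr; auto_derive; [intro; apply Hs; nra | field; lra]. }
  eapply is_derive_ext; [intro; reflexivity|].
  replace (- cos (2 * (INR N + 1) * t) * cos t / (4 * (INR N + 1) * sin t ^ 2))
    with (odd_cos_sum N t - (sin (2 * (INR N + 1) * t) / (2 * sin t)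
      + cos (2 * (INR N + 1) * t) * cos t / (4 * (INR N + 1) * sin t ^ 2)))
    by (rewrite <- (odd_cos_sum_closed N t); field; lra).
  exact (is_derive_minus _ _ _ _ _ (is_derive_odd_sin_sum N t) Hcorr).
Qed.

Lemma Rabs_div_le_inv a b d : Rabs a <= 1 -> 0 < d <= b -> Rabs (a / b) <= 1 / d.
Proof.
  intros Ha Hd; unfold Rdiv; rewrite Rabs_mult, Rabs_inv, (Rabs_pos_eq b) by lra.
  apply Rmult_le_compat; [apply Rabs_pos | left; apply Rinv_0_lt_compat; lra | exact Ha |].
  apply Rinv_le_contravar; lra.
Qed.

Lemma sin_ge_between y t : 0 < y < PI ->
  Rmin y (PI / 2) <= t <= Rmax y (PI / 2) -> Rmin (sin y) 1 <= sin t.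
Proof.
  intros Hy Ht; apply Rle_trans with (sin y); [apply Rmin_l|].
  destruct (Rle_dec y (PI / 2)).
  - rewrite Rmin_left, Rmax_right in Ht by lra; apply sin_incr_1; lra.
  - rewrite Rmin_right, Rmax_left in Ht by lra; apply sin_decr_1; lra.
Qed.

Lemma odd_sin_corr_bound M t m : 0 < M -> 0 < m -> m <= sin t ->
  Rabs (odd_sin_corr M t) <= 1 / (4 * M * m).
Proof.
  intros HM Hm Ht; apply Rabs_div_le_inv; [rewrite Rabs_Ropp; apply Rabs_le, COS_bound|].
  split; [apply Rmult_lt_0_compat | apply Rmult_le_compat_l]; lra.
Qed.

Lemma odd_sin_corr_deriv_bound M t m : 0 < M -> 0 < m -> m <= sin t ->
  Rabs (- cos (2 * M * t) * cos t / (4 * M * sin t ^ 2)) <= 1 / (4 * M * m ^ 2).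
Proof.
  intros HM Hm Ht; apply Rabs_div_le_inv.
  - rewrite Rabs_mult, Rabs_Ropp, <- (Rmult_1_l 1).
    apply Rmult_le_compat; try apply Rabs_pos; apply Rabs_le, COS_bound.
  - split; [apply Rmult_lt_0_compat; [lra | apply pow_lt; lra]|].
    apply Rmult_le_compat_l; [lra | apply pow_incr; lra].
Qed.

Lemma odd_sin_sum_sub_PI2_bound y : 0 < y < PI ->
  exists C, forall N, Rabs (odd_sin_sum N y - odd_sin_sum N (PI / 2)) <= C / (INR N + 1).
Proof.
  intro Hy; assert (HP := PI_RGT_0).
  set (m := Rmin (sin y) 1).
  assert (Hm : 0 < m) by (unfold m, Rmin; destruct Rle_dec; [apply sin_gt_0|]; lra).
  assert (Hsin : forall t, Rmin y (PI / 2) <= t <= Rmax y (PI / 2) -> m <= sin t)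
    by (intros; now apply sin_ge_between).
  exists (Rabs (PI / 2 - y) / (4 * m ^ 2) + 1 / (2 * m)); intro N.
  assert (HM : 0 < INR N + 1) by (assert (0 <= INR N) by apply pos_INR; lra).
  set (M := INR N + 1) in *.
  set (H := fun t => odd_sin_sum N t - odd_sin_corr M t).
  destruct (MVT_gen H y (PI / 2)
    (fun t => - cos (2 * M * t) * cos t / (4 * M * sin t ^ 2))) as [c [Hc Heq]].
  - intros x Hx; apply is_derive_odd_sin_sum_corr.
    assert (m <= sin x) by (apply Hsin; lra); lra.
  - intros x Hx; apply continuity_pt_filterlim, (ex_derive_continuous H).
    eexists; apply is_derive_odd_sin_sum_corr.
    assert (m <= sin x) by (apply Hsin; lra); lra.
  - assert (Hdc := odd_sin_corr_deriv_bound M c m HM Hm (Hsin c Hc)).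
    assert (Hcorr := fun t => odd_sin_corr_bound M t m HM Hm).
    assert (Hy' : m <= sin y) by (apply Hsin; split; [apply Rmin_l | apply Rmax_l]).
    assert (Hp' : m <= sin (PI / 2)) by (apply Hsin; split; [apply Rmin_r | apply Rmax_r]).
    replace (odd_sin_sum N y - odd_sin_sum N (PI / 2))
      with (- (H (PI / 2) - H y) + (odd_sin_corr M y - odd_sin_corr M (PI / 2)))
      by (unfold H; ring).
    rewrite Heq.
    eapply Rle_trans; [apply Rabs_triang|].
    eapply Rle_trans; [apply Rplus_le_compat|].
    + rewrite Rabs_Ropp, Rabs_mult; apply Rmult_le_compat_r; [apply Rabs_pos | exact Hdc].
    + eapply Rle_trans; [apply Rabs_triang|]; rewrite Rabs_Ropp.
      apply Rplus_le_compat; apply Hcorr; assumption.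
    + apply Req_le; field; lra.
Qed.

Lemma is_lim_odd_sin_sum_PI2 : is_lim_seq (fun N => odd_sin_sum N (PI / 2)) (PI / 4).
Proof.
  assert (Hleib : Un_cv (fun N => sum_f_R0 (tg_alt PI_tg) N) (PI / 4)).
  { rewrite <- Alt_PI_eq; unfold Alt_PI; destruct exist_PI as [l Hl].
    now replace (4 * l / 4) with l by field. }
  apply is_lim_seq_Reals in Hleib.
  eapply is_lim_seq_ext; [|exact Hleib].
  intro N; unfold odd_sin_sum; rewrite <- sum_n_Reals; apply sum_n_ext; intro n.
  unfold tg_alt, PI_tg; rewrite plus_INR, mult_INR; simpl (INR 2); simpl (INR 1).
  replace ((2 * INR n + 1) * (PI / 2)) with (PI / 2 + INR n * PI) by field.
  now rewrite <- cos_sin, INR_IZR_INZ, cos_IZR_mul_PI, <- pow_m1_sgnpow.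
Qed.

Lemma is_lim_seq_div_INR_S C : is_lim_seq (fun N => C / (INR N + 1)) 0.
Proof.
  assert (Hinv : is_lim_seq (fun N => / INR (S N)) 0).
  { apply (is_lim_seq_inv (fun N => INR (S N)) p_infty); [|discriminate].
    apply (is_lim_seq_incr_1 INR), is_lim_seq_INR. }
  apply (is_lim_seq_scal_l _ C) in Hinv; rewrite Rbar_mult_0_r in Hinv.
  eapply is_lim_seq_ext; [|exact Hinv]; intro N; cbv beta; unfold Rdiv; now rewrite <- S_INR.
Qed.

Lemma is_series_odd_sin y : 0 < y < PI ->
  is_series (fun n => sin ((2 * INR n + 1) * y) / (2 * INR n + 1)) (PI / 4).
Proof.
  intro Hy; destruct (odd_sin_sum_sub_PI2_bound y Hy) as [C HC].
  assert (Hdiff : is_lim_seq (fun N => odd_sin_sum N y - odd_sin_sum N (PI / 2)) 0).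
  { apply is_lim_seq_abs_0.
    apply (is_lim_seq_le_le (fun _ => 0) _ (fun N => C / (INR N + 1))).
    - intro N; split; [apply Rabs_pos | apply HC].
    - apply is_lim_seq_const.
    - apply is_lim_seq_div_INR_S. }
  assert (H := is_lim_seq_plus' _ _ _ _ is_lim_odd_sin_sum_PI2 Hdiff).
  rewrite Rplus_0_r in H.
  apply (is_lim_seq_ext _ (fun N => odd_sin_sum N y)) in H; [exact H | intro; ring].
Qed.

Lemma is_series_sin_PI_mul_div k M : (0 < k)%Z -> (M mod k <> 0)%Z ->
  is_series (fun n => sin (PI * IZR M * IZR (2 * Z.of_nat n + 1) / IZR k)
                      / IZR (2 * Z.of_nat n + 1))
    (IZR (sgnpow (M / k)) * (PI / 4)).
Proof.
  intros Hk Hr.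
  set (q := (M / k)%Z); set (r := (M mod k)%Z).
  assert (HM : M = (k * q + r)%Z) by apply Z_div_mod_eq_full.
  assert (Hb := Z.mod_pos_bound M k Hk); fold r in Hb.
  assert (Hkr : 0 < IZR k) by now apply IZR_lt.
  assert (Hrr : 0 < IZR r) by (apply IZR_lt; lia).
  assert (Hrk : IZR r < IZR k) by (apply IZR_lt; lia).
  assert (HP := PI_RGT_0).
  assert (Hy : 0 < PI * IZR r / IZR k < PI).
  { split; [apply Rdiv_lt_0_compat; [apply Rmult_lt_0_compat|]; lra|].
    apply Rmult_lt_reg_r with (IZR k); [lra|].
    unfold Rdiv; rewrite Rmult_assoc, Rinv_l, Rmult_1_r by lra.
    apply Rmult_lt_compat_l; lra. }
  eapply is_series_ext; [|exact (is_series_mult_l (IZR (sgnpow q)) _ _ (is_series_odd_sin _ Hy))].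
  intro n; cbv beta; rewrite IZR_odd.
  replace (PI * IZR M * (2 * INR n + 1) / IZR k) with
     ((2 * INR n + 1) * (PI * IZR r / IZR k) + IZR ((2 * Z.of_nat n + 1) * q) * PI)
    by (rewrite HM, mult_IZR, IZR_odd, plus_IZR, mult_IZR; field; lra).
  rewrite sin_plus_IZR_mul_PI, (sgnpow_even_eq ((2 * Z.of_nat n + 1) * q) q).
  - unfold Rdiv; symmetry; apply Rmult_assoc.
  - now rewrite Z.even_mul, Z.even_add, Z.even_mul.
Qed.

(** * A finite Fourier expansion of the tangent *)

Definition alt_sin_sum (m : nat) (x : R) : R :=
  rsum (fun j => (-1) ^ j * INR j * sin (2 * INR j * x)) (seq 1 m).

Lemma alt_sin_sum_closed m x : 4 * cos x ^ 2 * alt_sin_sum m x =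
  (-1) ^ m * (sin (2 * INR m * x) + 2 * INR m * cos x * sin ((2 * INR m + 1) * x)).
Proof.
  unfold alt_sin_sum; induction m as [|m IH].
  - unfold rsum; simpl; replace (2 * 0 * x) with 0 by ring; rewrite sin_0; ring.
  - rewrite rsum_seq_S, Rmult_plus_distr_l, IH, S_INR.
    assert (Hsin2 : sin (2 * INR m * x)
      = 2 * cos x * sin ((2 * INR m + 1) * x) - sin (2 * (INR m + 1) * x)).
    { replace (2 * INR m * x) with ((2 * INR m + 1) * x - x) by ring.
      replace (2 * (INR m + 1) * x) with ((2 * INR m + 1) * x + x) by ring.
      rewrite sin_plus, sin_minus; ring. }
    assert (Hsin3 : sin ((2 * (INR m + 1) + 1) * x)
      = 2 * cos x * sin (2 * (INR m + 1) * x) - sin ((2 * INR m + 1) * x)).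
    { replace ((2 * (INR m + 1) + 1) * x) with (2 * (INR m + 1) * x + x) by ring.
      replace ((2 * INR m + 1) * x) with (2 * (INR m + 1) * x - x) by ring.
      rewrite sin_plus, sin_minus; ring. }
    rewrite Hsin2, Hsin3; simpl; ring.
Qed.

Lemma tan_alt_sin_sum t x :
  cos (2 * (2 * INR t + 1) * x) = -1 -> cos x <> 0 ->
  tan x = 2 / (2 * INR t + 1) * alt_sin_sum (2 * t) x.
Proof.
  intros Hc Hx; assert (Ht : 0 <= INR t) by apply pos_INR.
  set (K := 2 * INR t + 1) in *.
  assert (Hs : sin (2 * K * x) = 0).
  { assert (H := sin2_cos2 (2 * K * x)); rewrite Hc in H; unfold Rsqr in H; nra. }
  assert (Hclosed := alt_sin_sum_closed (2 * t) x).
  assert (H2t : INR (2 * t) = 2 * INR t) by (rewrite mult_INR; simpl; ring).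
  rewrite pow_1_even, H2t in Hclosed.
  replace (2 * (2 * INR t) * x) with (2 * K * x - 2 * x) in Hclosed by (unfold K; ring).
  replace ((2 * (2 * INR t) + 1) * x) with (2 * K * x - x) in Hclosed by (unfold K; ring).
  rewrite !sin_minus, Hs, Hc, sin_2a in Hclosed.
  apply Rmult_eq_reg_l with (4 * cos x ^ 2 * K).
  - replace (4 * cos x ^ 2 * K * (2 / K * alt_sin_sum (2 * t) x))
      with (2 * (4 * cos x ^ 2 * alt_sin_sum (2 * t) x)) by (field; unfold K; lra).
    rewrite Hclosed; unfold tan, K; field; lra.
  - apply Rmult_integral_contrapositive; split; [|unfold K; lra].
    apply Rmult_integral_contrapositive; split; [lra | now apply pow_nonzero].
Qed.

Section MulMod.
Local Open Scope Z_scope.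
Variables h k : Z.
Hypothesis k_pos : 0 < k.
Hypothesis hk_coprime : Z.gcd h k = 1.

Lemma divide_mul_coprime_l m : (k | h * m) -> (k | m).
Proof. intro Hd; apply (Z.gauss _ h); [exact Hd | now rewrite Z.gcd_comm]. Qed.

Lemma mulmod_neq0 j : 0 < j < k -> (h * j) mod k <> 0.
Proof.
  intros Hj H0; apply Z.mod_divide, divide_mul_coprime_l in H0; [|lia].
  destruct H0 as [z Hz]; destruct (Z_le_gt_dec z 0); nia.
Qed.

Lemma mulmod_inj a b : 0 <= a < k -> 0 <= b < k -> (h * a) mod k = (h * b) mod k -> a = b.
Proof.
  intros Ha Hb Hab.
  assert (Hd : (k | a - b)).
  { apply divide_mul_coprime_l, Z.mod_divide; [lia|].
    now rewrite Z.mul_sub_distr_l, Zminus_mod, Hab, Z.sub_diag. }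
  destruct Hd as [z Hz]; destruct (Z.lt_trichotomy z 0) as [|[|]]; nia.
Qed.

Lemma mulmod_perm :
  Permutation (map (fun j => Z.to_nat ((h * Z.of_nat j) mod k)) (seq 1 (Z.to_nat k - 1)))
              (seq 1 (Z.to_nat k - 1)).
Proof.
  apply Permutation_map_same_l.
  - apply FinFun.Injective_map_NoDup_in; [|apply seq_NoDup].
    intros a b Ha Hb Hab; apply in_seq in Ha, Hb.
    assert (Hma := Z.mod_pos_bound (h * Z.of_nat a) k k_pos).
    assert (Hmb := Z.mod_pos_bound (h * Z.of_nat b) k k_pos).
    apply Z2Nat.inj in Hab; [|lia|lia].
    apply Nat2Z.inj, mulmod_inj; lia.
  - intros r Hr; apply in_map_iff in Hr; destruct Hr as [j [<- Hj]]; apply in_seq in Hj.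
    assert (Hm := Z.mod_pos_bound (h * Z.of_nat j) k k_pos).
    assert (Hnz := mulmod_neq0 (Z.of_nat j) ltac:(lia)).
    apply in_seq; lia.
Qed.

End MulMod.

Lemma cos_PI_mul_div_neq0 h k o : (0 < k)%Z -> Z.gcd h k = 1%Z -> (o mod k <> 0)%Z ->
  cos (PI * IZR h * IZR o / (2 * IZR k)) <> 0.
Proof.
  intros Hk Hg Ho Hc; apply cos_eq_0_0 in Hc; destruct Hc as [z Hz].
  assert (Hkr : 0 < IZR k) by now apply IZR_lt.
  assert (HP := PI_RGT_0).
  assert (E : (h * o = k * (2 * z + 1))%Z).
  { apply eq_IZR; rewrite !mult_IZR, plus_IZR, mult_IZR.
    replace (IZR h * IZR o) with (PI * IZR h * IZR o / (2 * IZR k) * (2 * IZR k / PI))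
      by (field; lra).
    rewrite Hz; field; lra. }
  apply Ho, Z.mod_divide; [lia|].
  apply (divide_mul_coprime_l h k Hg); exists (2 * z + 1)%Z; lia.
Qed.

Lemma tan_term_expand h k t n :
  k = Z.of_nat (2 * t + 1) -> Z.gcd h k = 1%Z -> Z.odd h = true ->
  tan_term h k n = 2 / IZR k *
    rsum (fun j => (-1) ^ j * INR j *
      (sin (PI * IZR (h * Z.of_nat j) * IZR (2 * Z.of_nat n + 1) / IZR k)
       / IZR (2 * Z.of_nat n + 1))) (seq 1 (2 * t)).
Proof.
  intros Hkt Hg Hh.
  assert (Hk : (0 < k)%Z) by lia.
  assert (Hkr : 0 < IZR k) by now apply IZR_lt.
  assert (HkI : IZR k = 2 * INR t + 1)
    by (rewrite Hkt, <- INR_IZR_INZ, plus_INR, mult_INR; simpl; ring).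
  assert (HP := PI_RGT_0).
  unfold tan_term; cbv zeta; set (o := (2 * Z.of_nat n + 1)%Z).
  assert (Ho : 0 < IZR o) by (unfold o; rewrite IZR_odd; assert (0 <= INR n) by apply pos_INR; lra).
  destruct (Z.eqb_spec (o mod k) 0) as [H0|H0].
  - rewrite (rsum_ext_in _ (fun _ => 0 * 0)); [rewrite rsum_scal_l; ring|].
    intros j _; destruct (Z.mod_divide o k ltac:(lia)) as [[q Hq] _]; [exact H0|].
    replace (PI * IZR (h * Z.of_nat j) * IZR o / IZR k) with (IZR (h * Z.of_nat j * q) * PI)
      by (rewrite Hq, !mult_IZR; field; lra).
    rewrite sin_eq_0_1 by (now eexists); unfold Rdiv; ring.
  - set (x := PI * IZR h * IZR o / (2 * IZR k)).
    assert (Hc : cos (2 * (2 * INR t + 1) * x) = -1).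
    { rewrite <- HkI.
      replace (2 * IZR k * x) with (IZR (h * o) * PI) by (unfold x; rewrite mult_IZR; field; lra).
      rewrite cos_IZR_mul_PI; unfold sgnpow, o.
      now rewrite Z.even_mul, <- Z.negb_odd, Hh, Z.even_add, Z.even_mul. }
    rewrite (tan_alt_sin_sum t x Hc (cos_PI_mul_div_neq0 h k o Hk Hg H0)), <- HkI.
    unfold alt_sin_sum; rewrite (Rdiv_def (_ * _)), Rmult_assoc; f_equal.
    rewrite Rmult_comm, <- rsum_scal_l; apply rsum_ext_in; intros j _.
    replace (PI * IZR (h * Z.of_nat j) * IZR o / IZR k) with (2 * INR j * x)
      by (unfold x; rewrite mult_IZR, <- INR_IZR_INZ; field; lra).
    field; lra.
Qed.

Definition alt_index_sum (h k : Z) (n : nat) : R :=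
  rsum (fun j => IZR (sgnpow (Z.of_nat j + h * Z.of_nat j / k) * Z.of_nat j)) (seq 1 n).

Lemma is_series_tan_term h k t :
  k = Z.of_nat (2 * t + 1) -> Z.gcd h k = 1%Z -> Z.odd h = true ->
  is_series (tan_term h k) (PI / (2 * IZR k) * alt_index_sum h k (2 * t)).
Proof.
  intros Hkt Hg Hh.
  assert (Hk : (0 < k)%Z) by lia.
  assert (Hkr : 0 < IZR k) by now apply IZR_lt.
  eapply is_series_ext; [intro n; symmetry; exact (tan_term_expand h k t n Hkt Hg Hh)|].
  replace (PI / (2 * IZR k) * alt_index_sum h k (2 * t)) with (2 / IZR k *
    rsum (fun j => (-1) ^ j * INR j * (IZR (sgnpow (h * Z.of_nat j / k)) * (PI / 4)))
      (seq 1 (2 * t))).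
  - apply is_series_mult_l, is_series_rsum; intros j Hj; apply in_seq in Hj.
    apply is_series_mult_l, is_series_sin_PI_mul_div; [exact Hk|].
    apply mulmod_neq0; [exact Hk | exact Hg | lia].
  - unfold alt_index_sum; rewrite <- !rsum_scal_l; apply rsum_ext_in; intros j _.
    rewrite sgnpow_add, !mult_IZR, pow_m1_sgnpow, INR_IZR_INZ; field; lra.
Qed.

(** * The reciprocity identity *)

Lemma rsum_alt_seq t : rsum (fun r => (-1) ^ r * INR r) (seq 1 (2 * t)) = INR t.
Proof.
  induction t as [|t IH]; [unfold rsum; simpl; ring|].
  replace (2 * S t)%nat with (S (S (2 * t))) by lia.
  assert (Hodd : (-1) ^ S (2 * t) = -1) by apply pow_1_odd.
  assert (Heven : (-1) ^ S (S (2 * t)) = 1)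
    by (replace (S (S (2 * t))) with (2 * S t)%nat by lia; apply pow_1_even).
  rewrite !rsum_seq_S, IH, Hodd, Heven, !S_INR, mult_INR; simpl; ring.
Qed.

(* With [hJ = kq + r] and [h], [k] odd, [J + q] and [r] have the same parity. *)
Lemma sgnpow_div_mod_identity h k J : Z.odd h = true -> Z.odd k = true ->
  (k * (sgnpow (J + h * J / k) * (h * J / k)) - h * (sgnpow (J + h * J / k) * J)
   = - (sgnpow ((h * J) mod k) * ((h * J) mod k)))%Z.
Proof.
  intros Hh Hk.
  destruct (proj1 (Z.odd_spec h) Hh) as [a ->], (proj1 (Z.odd_spec k) Hk) as [b ->].
  set (k := (2 * b + 1)%Z); set (q := ((2 * a + 1) * J / k)%Z);
    set (r := ((2 * a + 1) * J mod k)%Z).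
  assert (E : ((2 * a + 1) * J = k * q + r)%Z) by apply Z_div_mod_eq_full.
  rewrite (sgnpow_even_eq (J + q) r).
  - replace r with ((2 * a + 1) * J - k * q)%Z by lia; ring.
  - replace (J + q)%Z with (r + 2 * ((b + 1) * q - a * J))%Z by (unfold k in E; lia).
    rewrite Z.even_add, Z.even_mul; now destruct (Z.even r).
Qed.

Lemma B_1_alt_index_sum h k t :
  k = Z.of_nat (2 * t + 1) -> Z.gcd h k = 1%Z -> Z.odd h = true ->
  IZR k * IZR (B_1 h k) - IZR h * alt_index_sum h k (2 * t) = - INR t.
Proof.
  intros Hkt Hg Hh.
  assert (Hk : (0 < k)%Z) by lia.
  assert (Hko : Z.odd k = true) by (rewrite Hkt, Nat2Z.inj_add, Nat2Z.inj_mul; apply Z.odd_odd).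
  assert (Hn : (Z.to_nat k - 1 = 2 * t)%nat) by lia.
  assert (Hperm := mulmod_perm h k Hk Hg); rewrite Hn in Hperm.
  set (rho := fun j => Z.to_nat ((h * Z.of_nat j) mod k)) in Hperm.
  assert (Halt : INR t = rsum (fun j => (-1) ^ rho j * INR (rho j)) (seq 1 (2 * t)))
    by now rewrite <- rsum_alt_seq, <- (rsum_perm _ _ _ Hperm), rsum_map.
  unfold B_1, alt_index_sum; rewrite Hn, IZR_fold_Zplus, Halt, <- !rsum_scal_l,
    <- rsum_minus, <- rsum_opp.
  apply rsum_ext_in; intros j _; cbv beta zeta.
  assert (Hr := Z.mod_pos_bound (h * Z.of_nat j) k Hk).
  rewrite pow_m1_sgnpow, INR_IZR_INZ; unfold rho; rewrite Z2Nat.id by lia.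
  rewrite <- !mult_IZR, <- minus_IZR, sgnpow_div_mod_identity by assumption.
  now rewrite opp_IZR.
Qed.

Theorem theorem22 (h k : Z) :
  (0 < k)%Z -> Z.gcd h k = 1%Z -> Z.odd h = true -> Z.odd k = true ->
  ex_series (tan_term h k) /\
  IZR (B_1 h k) =
    2 * IZR h / PI * Series (tan_term h k) + 1 / (2 * IZR k) - 1 / 2.
Proof.
  intros Hk Hg Hh Hko.
  destruct (proj1 (Z.odd_spec k) Hko) as [b Hb].
  assert (Hkt : k = Z.of_nat (2 * Z.to_nat b + 1)) by lia.
  assert (Hser := is_series_tan_term h k _ Hkt Hg Hh).
  split; [now exists (PI / (2 * IZR k) * alt_index_sum h k (2 * Z.to_nat b))|].
  assert (Hrec := B_1_alt_index_sum h k _ Hkt Hg Hh).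
  assert (HkI : IZR k = 2 * INR (Z.to_nat b) + 1)
    by (rewrite Hkt, <- INR_IZR_INZ, plus_INR, mult_INR; simpl; ring).
  assert (Hkr : 0 < IZR k) by now apply IZR_lt.
  assert (HP := PI_RGT_0).
  rewrite (is_series_unique _ _ Hser).
  apply Rmult_eq_reg_l with (IZR k); [|lra].
  replace (IZR k * IZR (B_1 h k))
    with (IZR h * alt_index_sum h k (2 * Z.to_nat b) - INR (Z.to_nat b)) by lra.
  rewrite HkI; field; split; lra.
Qed.
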